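(* Let $k$ be a non-negative integer. Suppose that $\ell(n)\le 2kn+n-k^2-k$ for every positive integer $n$. Then for every positive integer $n$, every Latin square of order $n$ has a partial transversal of length $n-k$.
   Context: An array of order $n$ is an $n\times n$ array with a symbol in each cell; an entry is a triple $(i,j,A_{ij})$ where $A_{ij}$ is the symbol in cell $(i,j)$. A partial transversal of length $k$ is a set of $k$ entries, no two of which agree in any of their three coordinates (row, column, symbol). A transversal of an $n\times n$ array is a partial transversal of length $n$. An array is Latin if no symbol appears more than once in any row or any column; a Latin square of order $n$ is an $n\times n$ Latin array with exactly $n$ distinct symbols. For each positive integer $n$, $\ell(n)$ denotes the least positive integer such that $\ell(n)\ge n$ and every $n\times n$ Latin array with at least $\ell(n)$ distinct symbols contains a transversal. *)

From HB Require Import structures.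
From mathcomp Require Import all_boot all_order all_algebra.
Set Implicit Arguments. Unset Strict Implicit. Unset Printing Implicit Defensive.

(* An array of order n: cell (i,j) holds symbol A i j; symbols are naturals
   (any countable supply of symbols is w.l.o.g. since at most n^2 occur). *)
Definition array (n : nat) := 'I_n -> 'I_n -> nat.

Definition symbols n (A : array n) : seq nat :=
  undup [seq A i j | i <- enum 'I_n, j <- enum 'I_n].

Definition nsymbols n (A : array n) : nat := size (symbols A).

Definition is_latin n (A : array n) : Prop :=
  (forall i j j', A i j = A i j' -> j = j') /\
  (forall i i' j, A i j = A i' j -> i = i').

Definition latin_square n (A : array n) : Prop :=
  is_latin A /\ nsymbols A = n.

(* A set of entries, represented by their cells (the entry of cell (i,j) is
   (i,j,A i j)); no two distinct entries agree in row, column, or symbol. *)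
Definition partial_transversal n (A : array n) (S : {set 'I_n * 'I_n}) : Prop :=
  forall e f, e \in S -> f \in S -> e != f ->
    [/\ e.1 != f.1, e.2 != f.2 & A e.1 e.2 != A f.1 f.2].

Definition has_partial_transversal n (A : array n) (len : nat) : Prop :=
  exists S : {set 'I_n * 'I_n}, #|S| = len /\ partial_transversal A S.

Definition has_transversal n (A : array n) : Prop :=
  has_partial_transversal A n.

Definition ell_cond (n m : nat) : Prop :=
  n <= m /\ forall A : array n, is_latin A -> m <= nsymbols A -> has_transversal A.

Definition is_ell (n l : nat) : Prop :=
  0 < l /\ ell_cond n l /\ forall m, 0 < m -> ell_cond n m -> l <= m.

From HB Require Import structures.
From mathcomp Require Import all_boot all_order all_algebra.
From mathcomp Require Import zify.
From Stdlib Require Import Classical Wf_nat.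
Import GRing.Theory Num.Theory.

Set Implicit Arguments.
Unset Strict Implicit.
Unset Printing Implicit Defensive.

(* Pad a Latin square A of order n to a Latin array of order n + k by giving
   every new cell its own fresh symbol.  The padded array has
   n + (n + k)^2 - n^2 = n + 2kn + k^2 symbols, which by hypothesis is at least
   l(n + k), so it has a transversal.  At most k of its entries lie in the k new
   rows and at most k in the k new columns, so at least n - k of them lie in the
   copy of A and form a partial transversal of A. *)

Lemma ex_subset_card (T : finType) (S : {set T}) m :
  m <= #|S| -> exists2 S' : {set T}, S' \subset S & #|S'| = m.
Proof.
move=> le_mS; exists [set x in take m (enum S)].
  by apply/subsetP => x; rewrite inE => /mem_take; rewrite mem_enum.
by rewrite cardsE (card_uniqP _) ?take_uniq ?enum_uniq // size_takel // -cardE.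
Qed.

Lemma card_in_preimset_leq (T T' : finType) (f : T -> T') (S : {set T}) (D : {set T'}) :
  {in S &, injective f} -> #|[set x in S | f x \in D]| <= #|D|.
Proof.
move=> f_inj; have f_inj' : {in [set x in S | f x \in D] &, injective f}.
  by move=> x y; rewrite !inE => /andP [xS _] /andP [yS _]; exact: f_inj.
rewrite -(card_in_imset f_inj'); apply/subset_leq_card/subsetP => y /imsetP [x].
by rewrite inE => /andP [_ fxD] ->.
Qed.

Lemma partial_transversal_subset n (A : array n) (S S' : {set 'I_n * 'I_n}) :
  S' \subset S -> partial_transversal A S -> partial_transversal A S'.
Proof. by move=> /subsetP sub PT e f /sub eS /sub fS; exact: PT. Qed.

Lemma has_partial_transversal_leq n (A : array n) m len :
  m <= len -> has_partial_transversal A len -> has_partial_transversal A m.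
Proof.
move=> le_m [S [cardS PT]]; rewrite -cardS in le_m.
have [S' sub cardS'] := ex_subset_card le_m.
by exists S'; split=> //; exact: partial_transversal_subset PT.
Qed.

Lemma partial_transversal_fst_inj n (A : array n) S :
  partial_transversal A S -> {in S &, injective fst}.
Proof.
move=> PT e f eS fS Eef; apply/eqP; apply: contraT => ne.
by have [] := PT e f eS fS ne; rewrite Eef eqxx.
Qed.

Lemma partial_transversal_snd_inj n (A : array n) S :
  partial_transversal A S -> {in S &, injective snd}.
Proof.
move=> PT e f eS fS Eef; apply/eqP; apply: contraT => ne.
by have [_ ] := PT e f eS fS ne; rewrite Eef eqxx.
Qed.

Section TopLeftBlock.

Variables n k : nat.

Definition block_cell (c : 'I_n * 'I_n) : 'I_(n + k) * 'I_(n + k) :=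
  (lshift k c.1, lshift k c.2).

Definition top_left_block := block_cell @: setT.

Definition outer_indices := [set rshift n j | j : 'I_k].

Lemma block_cell_inj : injective block_cell.
Proof. by move=> [a b] [c d] [/val_inj -> /val_inj ->]. Qed.

Lemma card_outer_indices : #|outer_indices| = k.
Proof. by rewrite card_imset ?card_ord //; exact: rshift_inj. Qed.

Lemma notin_top_left_block c :
  c \notin top_left_block -> (c.1 \in outer_indices) || (c.2 \in outer_indices).
Proof.
case: c => i j; apply: contraR; rewrite negb_or /=.
case: (split_ordP i) => [a ->|a ->]; last by rewrite imset_f.
case: (split_ordP j) => [b ->|b ->]; last by rewrite imset_f ?andbF.
by move=> _; apply/imsetP; exists (a, b).
Qed.

Lemma card_preimset_block_cell (T : {set 'I_(n + k) * 'I_(n + k)}) :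
  #|block_cell @^-1: T| = #|T :&: top_left_block|.
Proof.
rewrite -(card_imset _ block_cell_inj); apply: eq_card => c.
rewrite !inE; apply/imsetP/andP => [[d] | [cT /imsetP [d _ Ecd]]].
  by rewrite inE => dT ->; rewrite imset_f.
by exists d; rewrite // inE -Ecd.
Qed.

Lemma card_partial_transversal_top_left (B : array (n + k))
    (T : {set 'I_(n + k) * 'I_(n + k)}) :
  partial_transversal B T -> #|T| <= #|T :&: top_left_block| + k + k.
Proof.
move=> PT.
pose outer_rows := [set c in T | c.1 \in outer_indices].
pose outer_cols := [set c in T | c.2 \in outer_indices].
have sub : T \subset (T :&: top_left_block) :|: outer_rows :|: outer_cols.
  apply/subsetP => c cT; rewrite !inE cT /=.
  by case: (boolP (c \in top_left_block)) => // /notin_top_left_block.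
have := card_in_preimset_leq outer_indices (partial_transversal_fst_inj PT).
have := card_in_preimset_leq outer_indices (partial_transversal_snd_inj PT).
rewrite card_outer_indices => cols_le rows_le.
apply: leq_trans (subset_leq_card sub) _.
apply: leq_trans (leq_card_setU _ _) _; rewrite leq_add //.
by apply: leq_trans (leq_card_setU _ _) _; rewrite leq_add.
Qed.

Lemma partial_transversal_block_cell (A : array n) (B : array (n + k))
    (T : {set 'I_(n + k) * 'I_(n + k)}) :
  (forall i j, B (lshift k i) (lshift k j) = A i j) ->
  partial_transversal B T -> partial_transversal A (block_cell @^-1: T).
Proof.
move=> BA PT e f; rewrite !inE => eT fT ne.
have ne' : block_cell e != block_cell f by rewrite (inj_eq block_cell_inj).
have [ne1 ne2 ne3] := PT _ _ eT fT ne'.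
split; [exact: contra ne1 => /eqP /= -> | exact: contra ne2 => /eqP /= -> |].
by rewrite /= !BA in ne3.
Qed.

Lemma has_partial_transversal_top_left (A : array n) (B : array (n + k)) :
  (forall i j, B (lshift k i) (lshift k j) = A i j) ->
  has_transversal B -> has_partial_transversal A (n - k).
Proof.
move=> BA [T [cardT PT]].
apply: (has_partial_transversal_leq (len := #|block_cell @^-1: T|)).
  by have := card_partial_transversal_top_left PT; rewrite card_preimset_block_cell; lia.
by exists (block_cell @^-1: T); split=> //; exact: partial_transversal_block_cell PT.
Qed.

End TopLeftBlock.

Section Padding.

Variables (n k : nat) (A : array n).

Definition fresh_base := (\max_(c : 'I_n * 'I_n) A c.1 c.2).+1.

Definition pad_array : array (n + k) := fun i j =>
  match split i, split j with
  | inl a, inl b => A a b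
  | _, _ => fresh_base + enum_rank (i, j)
  end.

Lemma lt_fresh_base a b : A a b < fresh_base.
Proof. by rewrite ltnS (leq_bigmax (F := fun c : 'I_n * 'I_n => A c.1 c.2) (a, b)). Qed.

Lemma pad_array_lshift a b : pad_array (lshift k a) (lshift k b) = A a b.
Proof.
have split_lshift (c : 'I_n) : split (lshift k c) = inl c := unsplitK (inl c).
by rewrite /pad_array !split_lshift.
Qed.

Lemma pad_array_cases i j :
  (exists a b, [/\ i = lshift k a, j = lshift k b & pad_array i j = A a b])
  \/ pad_array i j = fresh_base + enum_rank (i, j).
Proof.
rewrite /pad_array; case: (split_ordP i) => a Ei; last by right.
by case: (split_ordP j) => b Ej; [left; exists a, b | right].
Qed.

Lemma pad_array_eq i j i' j' : pad_array i j = pad_array i' j' ->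
  (i, j) = (i', j') \/ exists a b a' b',
    [/\ i = lshift k a, j = lshift k b, i' = lshift k a', j' = lshift k b'
      & A a b = A a' b'].
Proof.
case: (pad_array_cases i j) => [[a [b [-> -> ->]]]|->];
case: (pad_array_cases i' j') => [[a' [b' [-> -> ->]]]|->].
- by right; exists a, b, a', b'.
- by have := lt_fresh_base a b; lia.
- by have := lt_fresh_base a' b'; lia.
- by move=> /addnI /ord_inj /enum_rank_inj; left.
Qed.

Lemma pad_array_latin : is_latin A -> is_latin pad_array.
Proof.
move=> [latin_rows latin_cols]; split.
- move=> i j j' /pad_array_eq [[]//|[a [b [a' [b' [-> -> /lshift_inj <- -> Eab]]]]]].
  by rewrite (latin_rows _ _ _ Eab).
- move=> i i' j /pad_array_eq [[]//|[a [b [a' [b' [-> -> -> /lshift_inj <- Eab]]]]]].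
  by rewrite (latin_cols _ _ _ Eab).
Qed.

Lemma nsymbols_pad_array :
  nsymbols A + ((n + k) * (n + k) - n * n) <= nsymbols pad_array.
Proof.
pose outer := ~: top_left_block n k.
have card_outer : #|outer| = (n + k) * (n + k) - n * n.
  rewrite cardsCs setCK card_imset ?cardsT ?card_prod ?card_ord //.
  exact: block_cell_inj.
have pad_outer c : c \in outer -> pad_array c.1 c.2 = fresh_base + enum_rank c.
  case: c => i j; rewrite inE; case: (pad_array_cases i j) => [[a [b [-> -> _]]]|//].
  by rewrite /top_left_block (imset_f (@block_cell n k) (in_setT (a, b))).
pose syms := symbols A ++ [seq fresh_base + enum_rank c | c <- enum outer].
have uniq_syms : uniq syms.
  rewrite cat_uniq undup_uniq /=; apply/andP; split.
    apply/hasPn => _ /mapP [c _ ->]; rewrite mem_undup; apply/negP.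
    by case/allpairsP => [[a b] [_ _ /= Ec]]; have := lt_fresh_base a b; lia.
  rewrite map_inj_uniq ?enum_uniq // => c d /addnI /ord_inj; exact: enum_rank_inj.
have sub_syms : {subset syms <= symbols pad_array}.
  move=> x; rewrite mem_cat mem_undup => /orP [/allpairsP [[a b] [_ _ ->]]|].
    by rewrite mem_undup -pad_array_lshift allpairs_f ?mem_enum.
  case/mapP => c; rewrite mem_enum => c_outer ->.
  by rewrite -pad_outer // mem_undup allpairs_f ?mem_enum.
have := uniq_leq_size uniq_syms sub_syms.
by rewrite size_cat size_map -cardE card_outer.
Qed.

End Padding.

Lemma ell_exists n : exists l, is_ell n l.
Proof.
pose P m := 0 < m /\ ell_cond n m.
(* An array of order n has at most n^2 symbols, so (n^2).+1 satisfies
   ell_cond vacuously. *)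
have P_square : P (n * n).+1.
  split=> //; split; first nia.
  move=> A _; rewrite /nsymbols /symbols ltnNge.
  by rewrite (leq_trans (size_undup _)) // size_allpairs size_enum_ord.
have [|l [[[l_gt0 ell_l] l_least] _]] :=
  dec_inh_nat_subset_has_unique_least_element P (fun m => classic (P m)).
  by exists (n * n).+1.
by exists l; split=> //; split=> // m m_gt0 ell_m; apply/leP/l_least.
Qed.

Theorem proposition1 (k : nat) :
  (forall n l : nat, 0 < n -> is_ell n l ->
     (l%:Z <= (2 * k * n + n)%:Z - (k ^ 2)%:Z - k%:Z)%R) ->
  forall n : nat, 0 < n ->
  forall A : array n, latin_square A -> has_partial_transversal A (n - k).
Proof.
move=> ell_bound n n_gt0 A [latA nsymbolsA].
have [l ell_l] := ell_exists (n + k).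
have := ell_bound _ _ (ltn_addr k n_gt0) ell_l.
case: ell_l => _ [[_ transversal_from_symbols] _] l_le.
apply: (has_partial_transversal_top_left (pad_array_lshift k A)).
apply: transversal_from_symbols; first exact: pad_array_latin.
apply: leq_trans (nsymbols_pad_array k A); rewrite nsymbolsA; lia.
Qed.
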